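(* Let $F$ be a Pythagorean formally real field with finitely many orderings, let $\sigma_1,\dots,\sigma_n\in X_F$ form a basis (i.e. their characters form a basis of $\chi(\dot F/\dot F^2)$ and every element of $X_F$ is a product of an odd number of them), and let $\tau\in\mathcal G_F$ be such that $\chi_\tau\sigma_i\in X_F$ for all $i=1,\dots,n$. Then $\chi_\tau X_F=X_F$.
   Context: $F$ has characteristic $0$; Pythagorean: every sum of two squares is a square; formally real: $-1$ is not a sum of squares. $\mathcal G_F=\mathrm{Gal}(F^{(3)}/F)$ is the W-group, where $F^{(2)}=F(\sqrt a:a\in\dot F)$ and $F^{(3)}$ is the compositum of all quadratic extensions $K$ of $F^{(2)}$ with $K/F$ Galois. $X_F$ is the set of orderings of $F$, each ordering $P$ identified with its signature character $\operatorname{sgn}_P\in\chi(\dot F/\dot F^2)=\mathrm{Hom}(\dot F/\dot F^2,\{\pm1\})$ ($\operatorname{sgn}_P(a)=1$ iff $a\in P$). For $\tau\in\mathcal G_F$, $\chi_\tau\in\chi(\dot F/\dot F^2)$ is the character $a\mapsto\tau(\sqrt a)/\sqrt a$; products of characters are pointwise. *)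

From HB Require Import structures.
From mathcomp Require Import all_boot all_order all_algebra all_fingroup all_field.
Set Implicit Arguments. Unset Strict Implicit. Unset Printing Implicit Defensive.
Import GRing.Theory.
Local Open Scope ring_scope.

Definition pythagorean (F : fieldType) : Prop :=
  forall a b : F, exists c : F, a ^+ 2 + b ^+ 2 = c ^+ 2.

Definition formally_real (F : fieldType) : Prop :=
  forall s : seq F, \sum_(x <- s) x ^+ 2 != -1.

(* An ordering of F, given as its positive cone P (containing 0):
   P + P <= P, P P <= P, P u -P = F, P n -P = {0}. *)
Definition ordering (F : fieldType) (P : pred F) : Prop :=
  [/\ forall a b, P a -> P b -> P (a + b),
      forall a b, P a -> P b -> P (a * b),
      forall a, P a \/ P (- a)
    & forall a, P a -> P (- a) -> a = 0].

Definition finitely_many_orderings (F : fieldType) : Prop :=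
  exists m (f : 'I_m -> pred F),
    forall P, ordering P -> exists i, forall a, P a = f i a.

(* A character chi in Hom(F^*/F^*2, {+-1}) is represented by the
   proposition "chi a = 1" for a <> 0 (values at 0 are irrelevant). *)
Definition is_char (F : fieldType) (c : F -> Prop) : Prop :=
  forall a b : F, a != 0 -> b != 0 -> (c (a * b) <-> (c a <-> c b)).

Definition char_eq (F : fieldType) (c d : F -> Prop) : Prop :=
  forall a : F, a != 0 -> (c a <-> d a).

Definition char_mul (F : fieldType) (c d : F -> Prop) : F -> Prop :=
  fun a => c a <-> d a.

Definition sgn (F : fieldType) (P : pred F) : F -> Prop := fun a => P a.

(* membership of a character in X_F (orderings identified with signatures) *)
Definition in_XF (F : fieldType) (c : F -> Prop) : Prop :=
  exists P : pred F, ordering P /\ char_eq c (sgn P).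

Definition prod_sgn (F : fieldType) n (sigma : 'I_n -> pred F)
  (S : {set 'I_n}) : F -> Prop :=
  fun a => ~~ odd #|[set i in S | ~~ sigma i a]|.

Definition XF_basis (F : fieldType) n (sigma : 'I_n -> pred F) : Prop :=
  [/\ forall i, ordering (sigma i),
      forall S : {set 'I_n}, char_eq (prod_sgn sigma S) (fun _ => True) ->
        S = set0,
      forall c : F -> Prop, is_char c ->
        exists S : {set 'I_n}, char_eq c (prod_sgn sigma S)
    &
      forall P, ordering P ->
        exists S : {set 'I_n}, odd #|S| /\ char_eq (sgn P) (prod_sgn sigma S)].

(* L is a (finite, normal) extension of F; F is identified with 1%VS.
   x is a square root of an element of F. *)
Definition sqrtF (F : fieldType) (L : fieldExtType F) (x : L) : bool :=
  x ^+ 2 \in 1%VS.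

(* b in E generates a quadratic (or trivial) extension E(sqrt b) which is
   Galois over F, where E = F^(2) is Galois over F: every F-conjugate of b
   lies in b E^2. (Automorphisms of E extend to L since L/F is normal.) *)
Definition galois_rad (F : fieldType) (L : splittingFieldType F)
  (E : {vspace L}) (b : L) : Prop :=
  b \in E /\
  forall g : gal_of {:L}, exists2 c, c \in E & g b = b * c ^+ 2.

(* L is (a copy of) F^(3), with s a list of square roots such that
   F^(2) = F(s):
   - F(s) contains every square root (in L) of elements of F,
     and every element of F has a square root in L  (so F(s) = F^(2));
   - L is generated over F^(2) by square roots of elements b of F^(2)
     with F^(2)(sqrt b)/F Galois (L is the compositum of such K);
   - every such quadratic extension occurs in L (maximality). *)
Definition is_F3 (F : fieldType) (L : splittingFieldType F) (s : seq L) : Prop :=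
  let F2 := <<1%VS & s>>%VS in
  [/\ all (@sqrtF F L) s,
      forall a : F, exists x : L, x ^+ 2 = a%:A,
      forall x : L, sqrtF x -> x \in F2,
      (exists t : seq L,
          (forall y, y \in t -> galois_rad F2 (y ^+ 2)) /\
          <<F2 & t>>%VS = fullv)
    & forall b : L, galois_rad F2 b -> exists y : L, y ^+ 2 = b].

(* chi_tau(a) = tau(sqrt a)/sqrt a; "chi_tau a = 1" iff tau fixes a square
   root of a (for a <> 0, equivalently every square root). *)
Definition chi_tau (F : fieldType) (L : splittingFieldType F)
  (tau : gal_of {:L}) : F -> Prop :=
  fun a => exists x : L, x ^+ 2 = a%:A /\ tau x = x.

(* Write x + y + z = 0 with x, y, z nonzero; an ordering never gives all three the same sign, and
   conversely a sign function on F^* that is odd, multiplicative and has this property is an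
   ordering.  Put chi = chi_tau and let P = sigma_i1 ... sigma_ik (k odd) be an ordering.  If chi
   is constant on x, y, z then chi P is as mixed as P.  Otherwise chi takes equal values on two of
   them, say x and y, and differs on z; since both sigma_i and chi sigma_i are orderings, this
   forces sigma_i x <> sigma_i y for every i, and because k is odd, P x <> P y, i.e.
   (chi P) x <> (chi P) y. *)

From HB Require Import structures.
From mathcomp Require Import all_boot all_order all_algebra all_fingroup all_field.
From mathcomp Require Import boolp.
Import GRing.Theory.
Local Open Scope ring_scope.
Set Implicit Arguments. Unset Strict Implicit.

Definition zero_sum_mixed (F : fieldType) (f : pred F) : Prop :=
  forall x y z : F, x != 0 -> y != 0 -> z != 0 -> x + y + z = 0 ->
    f x = f y -> f z = ~~ f x.

Lemma odd_card_sepC (T : finType) (S : {set T}) (p q : pred T) :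
  odd #|S| -> {in S, forall i, q i = ~~ p i} ->
  odd #|[set i in S | q i]| = ~~ odd #|[set i in S | p i]|.
Proof.
move=> oddS qNp.
have -> : [set i in S | q i] = S :\: [set i in S | p i].
  by apply/setP=> i; rewrite !inE; case iS: (i \in S) => //=; rewrite qNp ?andbT.
have sub_pS : [set i in S | p i] \subset S by apply/subsetP=> i; rewrite inE => /andP[].
move: oddS; rewrite -(cardsID [set i in S | p i] S) (setIidPr sub_pS) oddD.
by case: (odd _); case: (odd _).
Qed.

Section Orderings.
Variables (F : fieldType) (P : pred F).
Hypothesis P_ord : ordering P.

Lemma orderingN a : a != 0 -> P (- a) = ~~ P a.
Proof.
move=> a0; have [_ _ PUN PIN] := P_ord; case Pa: (P a) => /=.
  by apply/negP => /(PIN _ Pa) /eqP; rewrite (negbTE a0).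
by case: (PUN a); rewrite ?Pa.
Qed.

Lemma orderingM a b : a != 0 -> b != 0 -> P (a * b) = (P a == P b).
Proof.
have [_ PM _ _] := P_ord.
have PlM c d : c != 0 -> d != 0 -> P c -> P (c * d) = P d.
  move=> c0 d0 Pc; case Pd: (P d); first exact: PM.
  have : P (c * - d) by apply: PM; rewrite // orderingN // Pd.
  by rewrite mulrN orderingN ?mulf_neq0 // => /negbTE.
move=> a0 b0; case Pa: (P a); first by rewrite PlM.
rewrite -[a]opprK mulNr orderingN ?mulf_neq0 ?oppr_eq0 // PlM ?oppr_eq0 //.
by rewrite orderingN // Pa.
Qed.

Lemma ordering_zero_sum_mixed : zero_sum_mixed P.
Proof.
move=> x y z x0 y0 z0 sum0 Pxy; have [PD _ _ _] := P_ord.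
have zE : z = - (x + y) by apply/eqP; rewrite -addr_eq0 addrC sum0.
have xy0 : x + y != 0 by rewrite -oppr_eq0 -zE.
rewrite zE orderingN //; case Px: (P x).
  by rewrite PD // -Pxy.
have : P (- x + - y) by apply: PD; rewrite orderingN // -?Pxy Px.
by rewrite -opprD orderingN // => /negbTE.
Qed.

End Orderings.

Lemma ordering_of_signs (F : fieldType) (g : pred F) :
  (forall a, a != 0 -> g (- a) = ~~ g a) ->
  (forall a b, a != 0 -> b != 0 -> g (a * b) = (g a == g b)) ->
  zero_sum_mixed g -> ordering [pred a | (a == 0) || g a].
Proof.
move=> gN gM gmixed; split=> [a b | a b | a | a] /=.
- have [-> _ | a0 /= ga] := eqVneq a 0; first by rewrite add0r.
  have [-> _ | b0 /= gb] := eqVneq b 0; first by rewrite addr0 ga orbT.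
  have [// | ab0 /=] := eqVneq (a + b) 0.
  have := gmixed a b (- (a + b)) a0 b0; rewrite oppr_eq0 addrN gN // ga gb.
  by move=> /(_ ab0 erefl erefl) /negbFE.
- have [-> | a0 /= ga] := eqVneq a 0; first by rewrite mul0r eqxx.
  have [-> | b0 /= gb] := eqVneq b 0; first by rewrite mulr0 eqxx.
  by rewrite gM // ga gb orbT.
- have [-> | a0] := eqVneq a 0; first by left.
  by rewrite oppr_eq0 (negbTE a0) /= gN //; case: (g a); [left | right].
- have [// | a0] := eqVneq a 0.
  by rewrite oppr_eq0 (negbTE a0) /= gN // => ->.
Qed.

Section TwistByCharacter.
Variables (F : fieldType) (n : nat) (sigma : 'I_n -> pred F) (chi P : pred F).
Variable S : {set 'I_n}.
Hypothesis sigma_ord : forall i, ordering (sigma i).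
Hypothesis twist_ord : forall i, exists2 Q : pred F, ordering Q &
  forall a, a != 0 -> Q a = (chi a == sigma i a).
Hypothesis P_ord : ordering P.
Hypothesis oddS : odd #|S|.
Hypothesis P_prod : forall a, a != 0 -> P a = ~~ odd #|[set i in S | ~~ sigma i a]|.

Lemma twist_separates x y z : x != 0 -> y != 0 -> z != 0 -> x + y + z = 0 ->
  chi x = chi y -> chi z = ~~ chi x -> P y = ~~ P x.
Proof.
move=> x0 y0 z0 sum0 chixy chiz.
have sigma_sep : {in S, forall i, ~~ sigma i y = ~~ ~~ sigma i x}.
  move=> i _; have [Q Q_ord QE] := twist_ord i.
  have := ordering_zero_sum_mixed Q_ord x0 y0 z0 sum0.
  have := ordering_zero_sum_mixed (sigma_ord i) x0 y0 z0 sum0.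
  rewrite !QE // chiz chixy.
  by case: (chi y); case: (sigma i x); case: (sigma i y); case: (sigma i z); intuition.
by rewrite !P_prod // (odd_card_sepC oddS sigma_sep) negbK.
Qed.

Lemma twist_zero_sum_mixed : zero_sum_mixed (fun a => chi a == P a).
Proof.
move=> x y z x0 y0 z0 sum0.
have sum0_xzy : x + z + y = 0 by rewrite -addrA [z + y]addrC addrA.
have sum0_yzx : y + z + x = 0 by rewrite addrC addrA.
have sep_xy := twist_separates x0 y0 z0 sum0.
have sep_xz := twist_separates x0 z0 y0 sum0_xzy.
have sep_yz := twist_separates y0 z0 x0 sum0_yzx.
have P_mixed := ordering_zero_sum_mixed P_ord x0 y0 z0 sum0.
move: sep_xy sep_xz sep_yz P_mixed.
by case: (chi x); case: (chi y); case: (chi z); case: (P x); case: (P y); case: (P z);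
  intuition.
Qed.

Lemma ordering_twist : ordering [pred a | (a == 0) || (chi a == P a)].
Proof.
have [i0 _] : exists i0, i0 \in S by apply/card_gt0P; exact: odd_gt0.
have [Q Q_ord QE] := twist_ord i0.
have chiE a : a != 0 -> chi a = (Q a == sigma i0 a).
  by move/QE ->; case: (chi a); case: (sigma i0 a).
apply: ordering_of_signs => [a a0 | a b a0 b0 |]; last exact: twist_zero_sum_mixed.
  rewrite !chiE ?oppr_eq0 // !(orderingN Q_ord, orderingN (sigma_ord i0), orderingN P_ord) //.
  by case: (Q a); case: (sigma i0 a); case: (P a).
rewrite !chiE ?mulf_neq0 // !(orderingM Q_ord, orderingM (sigma_ord i0), orderingM P_ord) //.
by case: (Q a); case: (sigma i0 a); case: (P a); case: (Q b); case: (sigma i0 b); case: (P b).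
Qed.

End TwistByCharacter.

Lemma bool_iff_eq (b1 b2 : bool) : (b1 <-> b2) -> b1 = b2.
Proof. by move=> [b12 b21]; apply/idP/idP. Qed.

Lemma char_mul_sgnE (F : fieldType) (c : F -> Prop) (P : pred F) a :
  char_mul c (sgn P) a <-> (`[< c a >] == P a).
Proof.
rewrite /char_mul /sgn; split=> [cP | /eqP <-]; first exact/eqP/(asbool_equiv_eqP idP).
by split; [exact: asboolT | exact: asboolW].
Qed.

Unset Implicit Arguments.

Theorem lemma3p4 (F : fieldType) (L : splittingFieldType F) (s : seq L)
  (n : nat) (sigma : 'I_n -> pred F) (tau : gal_of {:L}) :
  [pchar F] =i pred0 ->
  pythagorean F ->
  formally_real F ->
  finitely_many_orderings F ->
  is_F3 s ->
  XF_basis sigma ->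
  (tau \in 'Gal({:L} / 1%AS)%g) ->
  (forall i, in_XF (char_mul (chi_tau tau) (sgn (sigma i)))) ->
  (* chi_tau X_F = X_F *)
  (forall P, ordering P -> in_XF (char_mul (chi_tau tau) (sgn P))) /\
  (forall P, ordering P ->
     exists Q, ordering Q /\ char_eq (sgn P) (char_mul (chi_tau tau) (sgn Q))).
Proof.
move=> _ _ _ _ _ [sigma_ord _ _ odd_basis] _ twist.
pose chi a := `[< chi_tau tau a >].
have twist_ord i : exists2 Q : pred F, ordering Q & forall a, a != 0 -> Q a = (chi a == sigma i a).
  have [Q [Q_ord QE]] := twist i; exists Q => // a /QE.
  by rewrite char_mul_sgnE /sgn => /bool_iff_eq.
have twistP P : ordering P -> exists2 R, ordering R & forall a, a != 0 -> R a = (chi a == P a).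
  move=> P_ord; have [S [oddS PS]] := odd_basis P P_ord.
  exists [pred a | (a == 0) || (chi a == P a)]; last by move=> a /negbTE /= ->.
  apply: (ordering_twist sigma_ord twist_ord P_ord oddS) => a /PS.
  by rewrite /sgn /prod_sgn => /bool_iff_eq.
split=> P /twistP [R R_ord RE]; [exists R | exists R]; split=> // a a0.
  by rewrite char_mul_sgnE /sgn RE.
by rewrite char_mul_sgnE -/(chi a) /sgn RE //; case: (P a); case: (chi a); split.
Qed.
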